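(* Let $p\in\mathcal M_1^+$ and define $\pi_k=\sum_{\ell\ge k}\frac{1}{\ell+1}p_\ell$ for $k\in\mathbb N_0$. Then $\pi=(\pi_k)\in\mathcal M_1^+$, and $$\mathcal R_1(p)_i=\sum_{j=0}^i\pi_j\,\pi_{i-j}=(\pi*\pi)_i\quad\text{for all }i\in\mathbb N_0,$$ where $\mathcal R_1(p)_i=\sum_{k,\ell\ge0,\ k+\ell\ge i}\frac{1+\min\{k,\ell,i,k+\ell-i\}}{(k+1)(\ell+1)}p_kp_\ell$ and $*$ is convolution in $\ell^1(\mathbb N_0)$.
   Context: $\mathcal M_1^+$ is the set of probability measures on $\mathbb N_0$, identified with nonnegative sequences summing to $1$. *)

From Stdlib Require Import Reals Lia.
From Coquelicot Require Export Coquelicot.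
Open Scope R_scope.

Definition M1plus (p : nat -> R) : Prop :=
  (forall k, 0 <= p k) /\ is_series p 1.

Definition pi_of (p : nat -> R) (k : nat) : R :=
  Series (fun n => p (n + k)%nat / INR (n + k + 1)).

Definition R1_term (p : nat -> R) (i k l : nat) : R :=
  if (i <=? k + l)%nat then
    (1 + INR (Nat.min (Nat.min k l) (Nat.min i (k + l - i))))
      / (INR (k + 1) * INR (l + 1)) * p k * p l
  else 0.

(* R_1(p)_i = sum over k,l >= 0 with k+l >= i (nonnegative terms; iterated sum) *)
Definition R_1 (p : nat -> R) (i : nat) : R :=
  Series (fun k => Series (fun l => R1_term p i k l)).

Definition conv (a b : nat -> R) (i : nat) : R :=
  sum_n (fun j => a j * b (i - j)%nat) i.

From Stdlib Require Import Reals Lia Lra Bool.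
From Coquelicot Require Import Coquelicot.
Open Scope R_scope.

(* Since pi_k = sum_(l >= k) p_l / (l+1), the partial sums satisfy
   sum_(k <= N) pi_k = sum_(k <= N) p_k + (N+1) pi_(N+1), and the last term lies
   between 0 and the tail sum_(l > N) p_l; hence sum pi = sum p = 1.
   For the convolution, write pi_j = sum_k [j <= k] p_k / (k+1) and expand
   pi_j pi_(i-j) as a double series.  After exchanging the finite sum over j <= i
   with the series, the coefficient of p_k p_l / ((k+1)(l+1)) is the number of
   j in [i - l, min(i, k)], i.e. 1 + min(k, l, i, k+l-i) if k + l >= i and 0
   otherwise. *)

Lemma Series_nonneg (a : nat -> R) :
  (forall n, 0 <= a n) -> ex_series a -> 0 <= Series a.
Proof.
  intros Ha Hex.
  replace 0 with (Series (fun n => 0 * a n)) by (rewrite Series_scal_l; ring).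
  apply Series_le; [|exact Hex].
  intro n; rewrite Rmult_0_l; split; [lra | apply Ha].
Qed.

Lemma ex_series_nonneg_le (a b : nat -> R) :
  (forall n, 0 <= a n <= b n) -> ex_series b -> ex_series a.
Proof.
  intro Hab. apply (@ex_series_le R_AbsRing R_CompleteNormedModule).
  intro n. change norm with Rabs; simpl.
  rewrite Rabs_pos_eq; apply Hab.
Qed.

Lemma ex_series_shift (a : nat -> R) (m : nat) :
  ex_series a -> ex_series (fun n => a (n + m)%nat).
Proof.
  intro Hex. apply (ex_series_incr_n a m) in Hex.
  eapply ex_series_ext; [|exact Hex].
  intro n; simpl; f_equal; lia.
Qed.

Lemma Series_split (a : nat -> R) (N : nat) : ex_series a ->
  Series a = sum_n a N + Series (fun n => a (n + S N)%nat).
Proof.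
  intro Hex. rewrite (Series_incr_n a (S N)) by (lia || exact Hex).
  rewrite sum_n_Reals. f_equal.
  apply Series_ext; intro n; f_equal; lia.
Qed.

Lemma Series_shift_indicator (a : nat -> R) (j : nat) :
  Series (fun n => a (n + j)%nat) = Series (fun k => if (j <=? k)%nat then a k else 0).
Proof.
  rewrite (Series_incr_n_aux (fun k => if (j <=? k)%nat then a k else 0) j).
  - apply Series_ext; intro n.
    destruct (Nat.leb_spec j (j + n)); [|lia].
    f_equal; lia.
  - intros k Hk. destruct (Nat.leb_spec j k); [lia | reflexivity].
Qed.

Lemma Series_mult_Series (a b : nat -> R) :
  Series a * Series b = Series (fun k => Series (fun l => a k * b l)).
Proof.
  rewrite <- Series_scal_r. apply Series_ext; intro k.
  symmetry; apply Series_scal_l.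
Qed.

Lemma sum_n_Series (F : nat -> nat -> R) (n : nat) :
  (forall j, ex_series (F j)) ->
  sum_n (fun j => Series (F j)) n = Series (fun k => sum_n (fun j => F j k) n).
Proof.
  intro Hex. symmetry. apply is_series_unique.
  induction n as [|n IH].
  - rewrite sum_O. apply (is_series_ext (F 0%nat)).
    + intro k; rewrite sum_O; reflexivity.
    + apply Series_correct, Hex.
  - rewrite sum_Sn.
    apply (is_series_ext (fun k => plus (sum_n (fun j => F j k) n) (F (S n) k))).
    + intro k; rewrite sum_Sn; reflexivity.
    + exact (is_series_plus _ _ _ _ IH (Series_correct _ (Hex (S n)))).
Qed.

Lemma sum_n_interval_indicator (a b n : nat) :
  sum_n (fun j => if ((a <=? j) && (j <=? b))%nat then 1 else 0) n
  = INR (S (Nat.min n b) - a).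
Proof.
  induction n as [|n IH].
  - rewrite sum_O.
    destruct (Nat.leb_spec a 0); destruct (Nat.leb_spec 0 b); cbn [andb].
    + replace (S (Nat.min 0 b) - a)%nat with 1%nat by lia; reflexivity.
    + lia.
    + replace (S (Nat.min 0 b) - a)%nat with 0%nat by lia; reflexivity.
    + lia.
  - rewrite sum_Sn, IH. change plus with Rplus.
    destruct (Nat.leb_spec a (S n)); destruct (Nat.leb_spec (S n) b); cbn [andb];
      [ replace (S (Nat.min (S n) b) - a)%nat with (S (S (Nat.min n b) - a)) by lia;
        rewrite S_INR; reflexivity
      | replace (S (Nat.min (S n) b) - a)%nat with (S (Nat.min n b) - a)%nat by lia;
        apply Rplus_0_r .. ].
Qed.

Definition weight (p : nat -> R) (k : nat) : R := p k / INR (k + 1).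

Definition tail_weight (p : nat -> R) (j k : nat) : R :=
  if (j <=? k)%nat then weight p k else 0.

Lemma INR_succ_pos (k : nat) : 0 < INR (k + 1).
Proof. apply lt_0_INR; lia. Qed.

Lemma mul_weight_le (p : nat -> R) (m k : nat) :
  0 <= p k -> (m <= k + 1)%nat -> INR m * weight p k <= p k.
Proof.
  intros Hp Hm. unfold weight.
  pose proof (INR_succ_pos k). pose proof (le_INR _ _ Hm).
  apply (Rmult_le_reg_r (INR (k + 1))); [lra|].
  replace (INR m * (p k / INR (k + 1)) * INR (k + 1)) with (INR m * p k) by (field; lra).
  nra.
Qed.

Lemma sum_n_tail_weight_mul (p : nat -> R) (i k l : nat) :
  sum_n (fun j => tail_weight p j k * tail_weight p (i - j) l) i = R1_term p i k l :> R.
Proof.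
  (* With truncated subtraction, [i - j <= l] and [i - l <= j] both mean [i <= j + l]. *)
  rewrite (sum_n_ext _ (fun j => mult (weight p k * weight p l)
             (if ((i - l <=? j) && (j <=? k))%nat then 1 else 0))).
  2: { intro j. unfold tail_weight. change mult with Rmult.
       destruct (Nat.leb_spec j k); destruct (Nat.leb_spec (i - j) l);
         destruct (Nat.leb_spec (i - l) j); cbn [andb]; (lia || lra). }
  rewrite sum_n_mult_l, sum_n_interval_indicator. change mult with Rmult.
  unfold R1_term, weight.
  pose proof (INR_succ_pos k). pose proof (INR_succ_pos l).
  destruct (Nat.leb_spec i (k + l)).
  - replace (S (Nat.min i k) - (i - l))%nat
      with (S (Nat.min (Nat.min k l) (Nat.min i (k + l - i)))) by lia.
    rewrite S_INR. field; lra.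
  - replace (S (Nat.min i k) - (i - l))%nat with 0%nat by lia.
    simpl; ring.
Qed.

Section PiOf.

Variable p : nat -> R.
Hypothesis p_nonneg : forall k, 0 <= p k.
Hypothesis p_summable : ex_series p.

Lemma weight_bounds (k : nat) : 0 <= weight p k <= p k.
Proof.
  split.
  - apply Rdiv_le_0_compat; [apply p_nonneg | apply INR_succ_pos].
  - rewrite <- (Rmult_1_l (weight p k)).
    apply (mul_weight_le p 1); [apply p_nonneg | lia].
Qed.

Lemma ex_series_weight_shift (j : nat) : ex_series (fun n => weight p (n + j)%nat).
Proof.
  apply ex_series_shift, (ex_series_nonneg_le _ p); [exact weight_bounds | exact p_summable].
Qed.

Lemma pi_of_S (j : nat) : pi_of p j = weight p j + pi_of p (S j).
Proof.
  change (pi_of p j) with (Series (fun n => weight p (n + j)%nat)).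
  rewrite Series_incr_1 by apply ex_series_weight_shift.
  f_equal. apply Series_ext; intro n.
  rewrite Nat.add_succ_comm; reflexivity.
Qed.

Lemma pi_of_nonneg (j : nat) : 0 <= pi_of p j.
Proof.
  apply Series_nonneg; [intro n; apply weight_bounds | apply ex_series_weight_shift].
Qed.

Lemma sum_n_pi_of (N : nat) :
  sum_n (pi_of p) N = sum_n p N + INR (S N) * pi_of p (S N) :> R.
Proof.
  induction N as [|N IH].
  - rewrite !sum_O, pi_of_S. unfold weight; simpl. field.
  - rewrite !sum_Sn, IH. change plus with Rplus.
    rewrite (pi_of_S (S N)). unfold weight.
    pose proof (pos_INR (S N)).
    replace (S N + 1)%nat with (S (S N)) by lia.
    rewrite (S_INR (S N)). field. lra.
Qed.

Lemma mul_pi_of_le_tail (N : nat) :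
  INR (S N) * pi_of p (S N) <= Series (fun n => p (n + S N)%nat).
Proof.
  unfold pi_of. rewrite <- Series_scal_l.
  apply Series_le; [|apply ex_series_shift, p_summable].
  intro n. split.
  - apply Rmult_le_pos; [apply pos_INR | apply (weight_bounds (n + S N))].
  - apply mul_weight_le; [apply p_nonneg | lia].
Qed.

Lemma is_series_pi_of : is_series (pi_of p) (Series p).
Proof.
  enough (lim : is_lim_seq (sum_n (pi_of p)) (Series p)) by exact lim.
  apply (is_lim_seq_le_le (sum_n p) (sum_n (pi_of p)) (fun _ => Series p)).
  - intro N. rewrite sum_n_pi_of.
    pose proof (Series_split p N p_summable).
    pose proof (mul_pi_of_le_tail N).
    pose proof (Rmult_le_pos _ _ (pos_INR (S N)) (pi_of_nonneg (S N))).
    lra.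
  - apply Series_correct, p_summable.
  - apply is_lim_seq_const.
Qed.

Lemma pi_of_tail_weight (j : nat) : pi_of p j = Series (tail_weight p j).
Proof. apply (Series_shift_indicator (weight p)). Qed.

Lemma ex_series_tail_weight (j : nat) : ex_series (tail_weight p j).
Proof.
  apply (ex_series_nonneg_le _ (weight p)).
  - intro k. unfold tail_weight. pose proof (weight_bounds k).
    destruct (j <=? k)%nat; lra.
  - apply (ex_series_nonneg_le _ p); [exact weight_bounds | exact p_summable].
Qed.

Lemma R_1_conv (i : nat) : R_1 p i = conv (pi_of p) (pi_of p) i.
Proof.
  set (F j k l := tail_weight p j k * tail_weight p (i - j) l).
  assert (ex_inner : forall j k, ex_series (F j k)).
  { intros j k.
    exact (@ex_series_scal_l R_AbsRing R_NormedModule _ _ (ex_series_tail_weight (i - j))). }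
  assert (ex_outer : forall j, ex_series (fun k => Series (F j k))).
  { intro j. apply (ex_series_ext (fun k => tail_weight p j k * Series (tail_weight p (i - j)))).
    - intro k. symmetry; apply Series_scal_l.
    - apply ex_series_scal_r, ex_series_tail_weight. }
  unfold conv, R_1.
  rewrite (sum_n_ext _ (fun j => Series (fun k => Series (F j k)))).
  2: { intro j. rewrite !pi_of_tail_weight. apply Series_mult_Series. }
  rewrite sum_n_Series by exact ex_outer.
  apply Series_ext; intro k.
  rewrite sum_n_Series by exact (fun j => ex_inner j k).
  apply Series_ext; intro l.
  symmetry; apply sum_n_tail_weight_mul.
Qed.

End PiOf.

Theorem proposition9 (p : nat -> R) (Hp : M1plus p) :
  M1plus (pi_of p) /\
  (forall i : nat, R_1 p i = conv (pi_of p) (pi_of p) i).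
Proof.
  destruct Hp as [p_nonneg p_sum1].
  assert (p_summable : ex_series p) by (exists 1; exact p_sum1).
  split; [split|].
  - apply pi_of_nonneg; assumption.
  - rewrite <- (is_series_unique p 1 p_sum1).
    apply is_series_pi_of; assumption.
  - intro i. apply R_1_conv; assumption.
Qed.
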